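(* Let $\mathcal O_q$ be the algebra defined in the context, with the degrees and subspaces $\mathcal O_d$ defined there. Then (i) the subspace $\mathcal O_1$ has basis $1,\mathcal W_0,\mathcal W_1$; (ii) for $d\ge2$, $$\mathcal O_d=E_d+\mathcal O_{d-1}+\sum_{k=1}^{d-1}\mathrm{Span}(\mathcal O_k\mathcal O_{d-k}),$$ where $E_d=0$ if $d$ is odd and $E_d=\mathbb F\tilde{\mathcal G}_n$ if $d=2n$ is even.
   Context: All algebras are associative and unital over a field $\mathbb F$; $q\in\mathbb F$ is nonzero and not a root of unity. For elements $X,Y$ of an algebra, $[X,Y]=XY-YX$ and $[X,Y]_q=qXY-q^{-1}YX$. Let $\rho=-(q^2-q^{-2})^2$. The algebra $\mathcal O_q$ is defined by generators (called alternating generators) $\mathcal W_{-k},\mathcal W_{k+1},\mathcal G_{k+1},\tilde{\mathcal G}_{k+1}$ ($k\in\mathbb N$) and the following relations for all $k,\ell\in\mathbb N$: $[\mathcal W_0,\mathcal W_{k+1}]=[\mathcal W_{-k},\mathcal W_1]=(\tilde{\mathcal G}_{k+1}-\mathcal G_{k+1})/(q+q^{-1})$; $[\mathcal W_0,\mathcal G_{k+1}]_q=[\tilde{\mathcal G}_{k+1},\mathcal W_0]_q=\rho\mathcal W_{-k-1}-\rho\mathcal W_{k+1}$; $[\mathcal G_{k+1},\mathcal W_1]_q=[\mathcal W_1,\tilde{\mathcal G}_{k+1}]_q=\rho\mathcal W_{k+2}-\rho\mathcal W_{-k}$; $[\mathcal W_{-k},\mathcal W_{-\ell}]=0$, $[\mathcal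 W_{k+1},\mathcal W_{\ell+1}]=0$; $[\mathcal W_{-k},\mathcal W_{\ell+1}]+[\mathcal W_{k+1},\mathcal W_{-\ell}]=0$; $[\mathcal W_{-k},\mathcal G_{\ell+1}]+[\mathcal G_{k+1},\mathcal W_{-\ell}]=0$; $[\mathcal W_{-k},\tilde{\mathcal G}_{\ell+1}]+[\tilde{\mathcal G}_{k+1},\mathcal W_{-\ell}]=0$; $[\mathcal W_{k+1},\mathcal G_{\ell+1}]+[\mathcal G_{k+1},\mathcal W_{\ell+1}]=0$; $[\mathcal W_{k+1},\tilde{\mathcal G}_{\ell+1}]+[\tilde{\mathcal G}_{k+1},\mathcal W_{\ell+1}]=0$; $[\mathcal G_{k+1},\mathcal G_{\ell+1}]=0$, $[\tilde{\mathcal G}_{k+1},\tilde{\mathcal G}_{\ell+1}]=0$; $[\tilde{\mathcal G}_{k+1},\mathcal G_{\ell+1}]+[\mathcal G_{k+1},\tilde{\mathcal G}_{\ell+1}]=0$. Assign degrees: $\deg\mathcal G_{k+1}=\deg\tilde{\mathcal G}_{k+1}=2k+2$ and $\deg\mathcal W_{-k}=\deg\mathcal W_{k+1}=2k+1$ for $k\in\mathbb N$. For $d\in\mathbb N$, $\mathcal O_d$ is the subspace of $\mathcal O_q$ spanned by all products $a_1a_2\cdots a_n$ ($n\in\mathbb N$, the empty product being $1$) of alternating generators with $\sum_{i=1}^n\deg(a_i)\le d$. *)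

From HB Require Import structures.
From mathcomp Require Import all_boot all_order all_algebra.
Set Implicit Arguments. Unset Strict Implicit. Unset Printing Implicit Defensive.
Import GRing.Theory.
Local Open Scope ring_scope.

(* Alternating generators:
   GWm k = W_{-k},  GWp k = W_{k+1},  GG k = G_{k+1},  GGt k = ~G_{k+1}  (k : nat) *)
Inductive gen := GWm of nat | GWp of nat | GG of nat | GGt of nat.

Definition gdeg (g : gen) : nat :=
  match g with
  | GWm k | GWp k => (2 * k + 1)%N
  | GG k | GGt k => (2 * k + 2)%N
  end.

Definition wdeg (w : seq gen) : nat := \sum_(g <- w) gdeg g.

Section Alg.
Variables (F : fieldType) (B : algType F).

Definition commr (x y : B) := x * y - y * x.
Definition qcommr (q : F) (x y : B) := q *: (x * y) - q^-1 *: (y * x).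

(* The defining relations of O_q, for elements
   Wm k = W_{-k}, Wp k = W_{k+1}, G k = G_{k+1}, Gt k = ~G_{k+1}. *)
Definition Oq_rel (q : F) (Wm Wp G Gt : nat -> B) : Prop :=
  let rho := - (q ^+ 2 - q ^- 2) ^+ 2 in
  forall k l : nat,
  commr (Wm 0) (Wp k) = (q + q^-1)^-1 *: (Gt k - G k) /\
  commr (Wm k) (Wp 0) = (q + q^-1)^-1 *: (Gt k - G k) /\
  qcommr q (Wm 0) (G k) = rho *: Wm k.+1 - rho *: Wp k /\
  qcommr q (Gt k) (Wm 0) = rho *: Wm k.+1 - rho *: Wp k /\
  qcommr q (G k) (Wp 0) = rho *: Wp k.+1 - rho *: Wm k /\
  qcommr q (Wp 0) (Gt k) = rho *: Wp k.+1 - rho *: Wm k /\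
  commr (Wm k) (Wm l) = 0 /\
  commr (Wp k) (Wp l) = 0 /\
  commr (Wm k) (Wp l) + commr (Wp k) (Wm l) = 0 /\
  commr (Wm k) (G l) + commr (G k) (Wm l) = 0 /\
  commr (Wm k) (Gt l) + commr (Gt k) (Wm l) = 0 /\
  commr (Wp k) (G l) + commr (G k) (Wp l) = 0 /\
  commr (Wp k) (Gt l) + commr (Gt k) (Wp l) = 0 /\
  commr (G k) (G l) = 0 /\
  commr (Gt k) (Gt l) = 0 /\
  commr (Gt k) (G l) + commr (G k) (Gt l) = 0.

Definition geval (Wm Wp G Gt : nat -> B) (g : gen) : B :=
  match g with GWm k => Wm k | GWp k => Wp k | GG k => G k | GGt k => Gt k end.

Definition weval (Wm Wp G Gt : nat -> B) (w : seq gen) : B :=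
  \prod_(g <- w) geval Wm Wp G Gt g.

Definition Span (P : B -> Prop) (x : B) : Prop :=
  exists (n : nat) (c : 'I_n -> F) (v : 'I_n -> B),
    (forall i, P (v i)) /\ x = \sum_(i < n) c i *: v i.

Definition prodset (P Q : B -> Prop) (y : B) : Prop :=
  exists a b, [/\ P a, Q b & y = a * b].

Definition Osub (Wm Wp G Gt : nat -> B) (d : nat) : B -> Prop :=
  Span (fun y => exists w, (wdeg w <= d)%N /\ y = weval Wm Wp G Gt w).

End Alg.

Definition alg_morph (F : fieldType) (A B : algType F) (f : A -> B) : Prop :=
  [/\ forall (a : F) (x y : A), f (a *: x + y) = a *: f x + f y,
      f 1 = 1 &
      forall x y : A, f (x * y) = f x * f y].

(* (A; Wm, Wp, G, Gt) is the algebra O_q presented by the alternating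
   generators and the relations Oq_rel: the relations hold in A, and A
   has the universal property of the presented algebra. *)
Definition is_Oq (F : fieldType) (q : F) (A : algType F)
    (Wm Wp G Gt : nat -> A) : Prop :=
  Oq_rel q Wm Wp G Gt /\
  forall (B : algType F) (Wm' Wp' G' Gt' : nat -> B),
    Oq_rel q Wm' Wp' G' Gt' ->
    exists f : A -> B,
      [/\ alg_morph f,
          (forall k, f (Wm k) = Wm' k /\ f (Wp k) = Wp' k /\
                     f (G k) = G' k /\ f (Gt k) = Gt' k) &
          forall g : A -> B, alg_morph g ->
            (forall k, g (Wm k) = Wm' k /\ g (Wp k) = Wp' k /\
                       g (G k) = G' k /\ g (Gt k) = Gt' k) ->
            forall x, g x = f x].

(* For d >= 2, a word of degree <= d with at least two letters splits as a
   product of a word of degree k and one of degree <= d - k, and a word of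
   degree < d lies in O_{d-1}.  A single generator of degree d is reduced by
   the defining relations: the q-commutator relations express W_{-k-1} and
   W_{k+2} through [W_0, G_{k+1}]_q, [G_{k+1}, W_1]_q and a generator of lower
   degree (rho is invertible since q^4 <> 1), and [W_0, W_{k+1}] expresses
   G_{k+1} through ~G_{k+1}, which is the only generator left over: it spans
   E_d.  For O_1, the words of degree <= 1 are 1, W_0 and W_1; these are
   linearly independent because O_q maps onto a commutative algebra of
   polynomials in which they become 1, X and X^2. *)

From mathcomp Require Import all_boot all_order all_algebra.
From mathcomp Require Import zify.
Import GRing.Theory.
Local Open Scope ring_scope.
Set Implicit Arguments. Unset Strict Implicit.

Section Subspace.
Variables (F : fieldType) (V : lmodType F).

Record subspace (S : V -> Prop) : Prop := Subspace {
  subspace0 : S 0;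
  subspaceD : forall x y, S x -> S y -> S (x + y);
  subspaceZ : forall (a : F) x, S x -> S (a *: x) }.

Lemma subspaceN S x : subspace S -> S x -> S (- x).
Proof. by move=> sS Sx; rewrite -scaleN1r; apply: subspaceZ. Qed.

Lemma subspaceB S x y : subspace S -> S x -> S y -> S (x - y).
Proof. by move=> sS Sx Sy; apply: subspaceD => //; apply: subspaceN. Qed.

Lemma subspace_sum S (I : Type) (r : seq I) (P : pred I) (f : I -> V) :
  subspace S -> (forall i, P i -> S (f i)) -> S (\sum_(i <- r | P i) f i).
Proof. by case=> S0 SD _; apply: big_ind. Qed.

End Subspace.

Section LinearFun.
Variables (F : fieldType) (U V : lmodType F) (f : U -> V).
Hypothesis flin : linear f.

Lemma lin_fun0 : f 0 = 0.
Proof.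
have := flin 1 0 0; rewrite !scale1r addr0 => h.
by apply: (addrI (f 0)); rewrite addr0 -h.
Qed.

Lemma lin_funD x y : f (x + y) = f x + f y.
Proof. by have := flin 1 x y; rewrite !scale1r. Qed.

Lemma lin_funZ (a : F) x : f (a *: x) = a *: f x.
Proof. by have := flin a x 0; rewrite !addr0 lin_fun0 addr0. Qed.

Lemma subspace_preim S : subspace S -> subspace (fun x => S (f x)).
Proof.
case=> S0 SD SZ; split=> [|x y Sx Sy|a x Sx]; rewrite ?lin_fun0 ?lin_funD ?lin_funZ.
- exact: S0.
- exact: SD.
- exact: SZ.
Qed.

End LinearFun.

Section SpanTheory.
Variables (F : fieldType) (A : algType F).

Lemma Span_subspace (P : A -> Prop) : subspace (Span P).
Proof.
split.
- by exists 0%N, (fun _ => 0), (fun _ => 0); split => [[]|]; rewrite ?big_ord0.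
- move=> x y [m [c [v [Pv ->]]]] [n [c' [v' [Pv' ->]]]].
  exists (m + n)%N, (fun i => match split i with inl j => c j | inr j => c' j end),
    (fun i => match split i with inl j => v j | inr j => v' j end); split.
    by move=> i; case: (split i).
  rewrite big_split_ord /=; congr (_ + _); apply: eq_bigr => i _.
    by rewrite (unsplitK (inl i)).
  by rewrite (unsplitK (inr i)).
- move=> a x [m [c [v [Pv ->]]]]; exists m, (fun i => a * c i), v; split => //.
  by rewrite scaler_sumr; apply: eq_bigr => i _; rewrite scalerA.
Qed.

Lemma Span_in (P : A -> Prop) x : P x -> Span P x.
Proof.
move=> Px; exists 1%N, (fun _ => 1), (fun _ => x); split=> //.
by rewrite big_ord1 scale1r.
Qed.

Lemma Span_min (P S : A -> Prop) :
  subspace S -> (forall x, P x -> S x) -> forall x, Span P x -> S x.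
Proof.
move=> sS PS x [n [c [v [Pv ->]]]].
by apply: subspace_sum => // i _; apply: subspaceZ => //; apply: PS.
Qed.

End SpanTheory.

Lemma gdeg_gt0 g : (0 < gdeg g)%N.
Proof. by case: g => k /=; lia. Qed.

Lemma wdeg_nil : wdeg [::] = 0%N.
Proof. by rewrite /wdeg big_nil. Qed.

Lemma wdeg_cons g w : wdeg (g :: w) = (gdeg g + wdeg w)%N.
Proof. by rewrite /wdeg big_cons. Qed.

Lemma wdeg_cat u v : wdeg (u ++ v) = (wdeg u + wdeg v)%N.
Proof. by rewrite /wdeg big_cat. Qed.

Lemma wdeg_le1 w :
  (wdeg w <= 1)%N -> [\/ w = [::], w = [:: GWm 0] | w = [:: GWp 0]].
Proof.
case: w => [|g w]; first by constructor.
rewrite wdeg_cons; case: w => [|g' w]; last first.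
  by rewrite wdeg_cons; have := gdeg_gt0 g; have := gdeg_gt0 g'; lia.
by rewrite wdeg_nil; case: g => [[|k]|[|k]|k|k] /=; try lia; constructor.
Qed.

Section Filtration.
Variables (F : fieldType) (A : algType F) (Wm Wp G Gt : nat -> A).
Local Notation O := (Osub Wm Wp G Gt).
Local Notation gev := (geval Wm Wp G Gt).
Local Notation wev := (weval Wm Wp G Gt).

Lemma weval_nil : wev [::] = 1.
Proof. by rewrite /weval big_nil. Qed.

Lemma weval_cons g w : wev (g :: w) = gev g * wev w.
Proof. by rewrite /weval big_cons. Qed.

Lemma weval_cat u v : wev (u ++ v) = wev u * wev v.
Proof. by rewrite /weval big_cat. Qed.

Lemma Osub_subspace d : subspace (O d).
Proof. exact: Span_subspace. Qed.

Lemma Osub_word d w : (wdeg w <= d)%N -> O d (wev w).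
Proof. by move=> hw; apply: Span_in; exists w. Qed.

Lemma Osub1 d : O d 1.
Proof. by rewrite -weval_nil; apply: Osub_word; rewrite wdeg_nil. Qed.

Lemma Osub_gen d g : (gdeg g <= d)%N -> O d (gev g).
Proof.
move=> hg; rewrite -[gev g]mulr1 -weval_nil -weval_cons.
by apply: Osub_word; rewrite wdeg_cons wdeg_nil addn0.
Qed.

Lemma Osub_le m n x : (m <= n)%N -> O m x -> O n x.
Proof.
move=> mn; apply: Span_min; first exact: Osub_subspace.
by move=> _ [w [hw ->]]; apply: Osub_word; apply: leq_trans mn.
Qed.

Lemma Osub_mul m n a b : O m a -> O n b -> O (m + n) (a * b).
Proof.
have sO := Osub_subspace (m + n).
move=> Oa Ob; move: a Oa; apply: Span_min.
  by apply: (subspace_preim (f := fun a => a * b)) sO => c x y; rewrite mulrDl scalerAl.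
move=> _ [u [hu ->]]; move: b Ob; apply: Span_min.
  by apply: (subspace_preim (f := fun b => wev u * b)) sO => c x y; rewrite mulrDr scalerAr.
move=> _ [v [hv ->]]; rewrite -weval_cat; apply: Osub_word.
by rewrite wdeg_cat leq_add.
Qed.

Lemma Osub1P x :
  O 1 x <-> exists a b c : F, x = a *: 1 + b *: Wm 0%N + c *: Wp 0%N.
Proof.
split; last first.
  move=> [a [b [c ->]]]; have sO := Osub_subspace 1.
  apply: subspaceD => //; first apply: subspaceD => //; apply: subspaceZ => //.
  - exact: Osub1.
  - exact: (Osub_gen (g:=GWm 0)).
  - exact: (Osub_gen (g:=GWp 0)).
move: x; apply: Span_min.
  split.
  - by exists 0, 0, 0; rewrite !scale0r !addr0.
  - move=> _ _ [a [b [c ->]]] [a' [b' [c' ->]]].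
    exists (a + a'), (b + b'), (c + c'); rewrite !scalerDl.
    by rewrite (addrACA (a *: 1 + _)) (addrACA (a *: 1)).
  - move=> s _ [a [b [c ->]]]; exists (s * a), (s * b), (s * c).
    by rewrite !scalerDr !scalerA.
move=> _ [w [/wdeg_le1[]-> ->]]; rewrite ?weval_cons weval_nil ?mulr1 /=.
- by exists 1, 0, 0; rewrite scale1r !scale0r !addr0.
- by exists 0, 1, 0; rewrite scale1r !scale0r add0r addr0.
- by exists 0, 0, 1; rewrite scale1r !scale0r !add0r.
Qed.

Definition Esub d (e : A) : Prop :=
  if odd d then e = 0 else exists a : F, e = a *: Gt (d./2).-1.

Lemma Esub_subspace d : subspace (Esub d).
Proof.
rewrite /Esub; case: (odd d); split.
- by [].
- by move=> _ _ -> ->; rewrite addr0.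
- by move=> a _ ->; rewrite scaler0.
- by exists 0; rewrite scale0r.
- by move=> _ _ [a ->] [b ->]; exists (a + b); rewrite scalerDl.
- by move=> a _ [b ->]; exists (a * b); rewrite scalerA.
Qed.

Definition Odecomp d (x : A) : Prop :=
  exists (e y : A) (z : nat -> A),
    [/\ Esub d e, O d.-1 y,
        (forall k, (1 <= k <= d.-1)%N -> Span (prodset (O k) (O (d - k))) (z k)) &
        x = e + y + \sum_(1 <= k < d) z k].

Lemma Odecomp_subspace d : subspace (Odecomp d).
Proof.
have sE := Esub_subspace d; have sO := Osub_subspace d.-1.
have sZ k := Span_subspace (prodset (O k) (O (d - k))).
split.
- exists 0, 0, (fun _ => 0); split; try exact: subspace0.
  + by move=> k _; apply: subspace0.
  + by rewrite big1 // !addr0.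
- move=> _ _ [e1 [y1 [z1 [He1 Hy1 Hz1 ->]]]] [e2 [y2 [z2 [He2 Hy2 Hz2 ->]]]].
  exists (e1 + e2), (y1 + y2), (fun k => z1 k + z2 k); split; try exact: subspaceD.
  + by move=> k hk; apply: subspaceD; auto.
  + by rewrite big_split /= addrACA (addrACA e1 y1 e2 y2).
- move=> a _ [e [y [z [He Hy Hz ->]]]].
  exists (a *: e), (a *: y), (fun k => a *: z k); split; try exact: subspaceZ.
  + by move=> k hk; apply: subspaceZ; auto.
  + by rewrite !scalerDr scaler_sumr.
Qed.

Lemma Odecomp_lower d y : O d.-1 y -> Odecomp d y.
Proof.
move=> Oy; exists 0, y, (fun _ => 0); split => //.
- exact: subspace0 (Esub_subspace _).
- move=> k _; exact: subspace0 (Span_subspace _).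
- by rewrite big1 // addr0 add0r.
Qed.

Lemma Odecomp_Gt d k : (2 * k + 2 <= d)%N -> Odecomp d (Gt k).
Proof.
rewrite leq_eqVlt => /orP[/eqP hd|hd]; last first.
  by apply: Odecomp_lower; apply: (Osub_gen (g:=GGt k)) => /=; lia.
exists (Gt k), 0, (fun _ => 0); split.
- have -> : d = k.+1.*2 by rewrite -hd -muln2; lia.
  by rewrite /Esub odd_double doubleK; exists 1; rewrite scale1r.
- exact: subspace0 (Osub_subspace _).
- move=> j _; exact: subspace0 (Span_subspace _).
- by rewrite big1 // !addr0.
Qed.

Lemma Odecomp_mul d m n a b :
  (0 < m)%N -> (0 < n)%N -> (m + n <= d)%N -> O m a -> O n b -> Odecomp d (a * b).
Proof.
move=> m0 n0 hd Oa Ob.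
exists 0, 0, (fun k => if k == m then a * b else 0); split.
- exact: subspace0 (Esub_subspace _).
- exact: subspace0 (Osub_subspace _).
- move=> k _; case: eqP => [->|_]; last exact: subspace0 (Span_subspace _).
  by apply: Span_in; exists a, b; split => //; apply: Osub_le Ob; lia.
- rewrite -big_mkcond /= big_nat1_eq.
  have -> : (1 <= m < d)%N by lia.
  by rewrite !add0r.
Qed.

Lemma Odecomp_word d w : (2 <= d)%N -> (wdeg w <= d)%N ->
  (forall g, (gdeg g <= d)%N -> Odecomp d (gev g)) -> Odecomp d (wev w).
Proof.
move=> d2 hw Ogen; case: w hw => [|g [|g' w]] hw.
- by rewrite weval_nil; apply/Odecomp_lower/Osub1.
- by rewrite weval_cons weval_nil mulr1; apply: Ogen; rewrite wdeg_cons wdeg_nil in hw; lia.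
rewrite weval_cons; move: hw; rewrite wdeg_cons => hw.
apply: (Odecomp_mul (gdeg_gt0 g) _ hw); last exact: Osub_word.
- by rewrite wdeg_cons; have := gdeg_gt0 g'; lia.
- exact: Osub_gen.
Qed.

Lemma Odecomp_Osub d x : (0 < d)%N -> Odecomp d x -> O d x.
Proof.
move=> d0 [e [y [z [He Hy Hz ->]]]]; have sO := Osub_subspace d.
apply: subspaceD => //; first apply: subspaceD => //.
- move: He; rewrite /Esub; case: ifP => hodd; first by move=> ->; apply: subspace0.
  move=> [a ->]; apply: subspaceZ => //; apply: (Osub_gen (g:=GGt _)) => /=.
  by have := odd_double_half d; rewrite hodd add0n -muln2; lia.
- by apply: Osub_le Hy; lia.
rewrite big_nat_cond; apply: subspace_sum => // k /andP[/andP[k1 kd] _].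
apply: Span_min (Hz k _) => //; last by lia.
by move=> _ [a [b [Oa Ob ->]]]; have := Osub_mul Oa Ob; rewrite subnKC //; lia.
Qed.

Lemma Odecomp_qcommr d (s t : F) g h : (gdeg g + gdeg h <= d)%N ->
  Odecomp d (s *: (gev g * gev h) - t *: (gev h * gev g)).
Proof.
move=> hd; have sD := Odecomp_subspace d.
have gh u v : (gdeg u + gdeg v <= d)%N -> Odecomp d (gev u * gev v).
  by move=> huv; apply: Odecomp_mul (gdeg_gt0 u) (gdeg_gt0 v) huv _ _; apply: Osub_gen.
by apply: subspaceB => //; apply: subspaceZ => //; apply: gh; rewrite // addnC.
Qed.

Section Relations.
Variable q : F.
Hypotheses (hR : Oq_rel q Wm Wp G Gt) (hq0 : q != 0) (hq4 : q ^+ 4 != 1).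
Local Notation rho := (- (q ^+ 2 - q ^- 2) ^+ 2).

Lemma rho_neq0 : rho != 0.
Proof.
rewrite oppr_eq0 expf_eq0 /= subr_eq0; apply: contra hq4 => /eqP h.
by rewrite (_ : 4 = 2 + 2)%N // exprD {1}h mulVf // expf_neq0.
Qed.

Lemma q_add_inv_neq0 : q + q^-1 != 0.
Proof.
apply: contra hq4 => /eqP h.
have q2 : q ^+ 2 = -1.
  by apply/eqP; rewrite -addr_eq0 expr2 -[1](mulfV hq0) -mulrDr h mulr0.
by rewrite (_ : 4 = 2 + 2)%N // exprD q2 mulrNN mulr1.
Qed.

Lemma Wm_succE k : Wm k.+1 = rho^-1 *: qcommr q (Wm 0%N) (G k) + Wp k.
Proof.
have [_ [_ [-> _]]] := hR k 0%N.
by rewrite scalerBr !scalerA mulVf ?rho_neq0 // !scale1r subrK.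
Qed.

Lemma Wp_succE k : Wp k.+1 = rho^-1 *: qcommr q (G k) (Wp 0%N) + Wm k.
Proof.
have [_ [_ [_ [_ [-> _]]]]] := hR k 0%N.
by rewrite scalerBr !scalerA mulVf ?rho_neq0 // !scale1r subrK.
Qed.

Lemma GE k : G k = Gt k - (q + q^-1) *: commr (Wm 0%N) (Wp k).
Proof.
have [-> _] := hR k 0%N.
by rewrite scalerA mulfV ?q_add_inv_neq0 // scale1r subKr.
Qed.

Lemma Odecomp_gen d g : (2 <= d)%N -> (gdeg g <= d)%N -> Odecomp d (gev g).
Proof.
move=> d2; have sD := Odecomp_subspace d.
have lower h : (gdeg h < d)%N -> Odecomp d (gev h).
  by move=> hh; apply/Odecomp_lower/Osub_gen; lia.
case: g => [[|k]|[|k]|k|k] /= hg.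
- by apply: (lower (GWm 0)) => /=; lia.
- rewrite Wm_succE; apply: subspaceD => //; last by apply: (lower (GWp k)) => /=; lia.
  by apply: subspaceZ => //; apply: (Odecomp_qcommr _ _ (g:=GWm 0) (h:=GG k)) => /=; lia.
- by apply: (lower (GWp 0)) => /=; lia.
- rewrite Wp_succE; apply: subspaceD => //; last by apply: (lower (GWm k)) => /=; lia.
  by apply: subspaceZ => //; apply: (Odecomp_qcommr _ _ (g:=GG k) (h:=GWp 0)) => /=; lia.
- rewrite GE; apply: subspaceB => //; first exact: Odecomp_Gt.
  rewrite /commr -[Wm 0%N * _]scale1r -[Wp k * _]scale1r.
  by apply: subspaceZ => //; apply: (Odecomp_qcommr _ _ (g:=GWm 0) (h:=GWp k)) => /=; lia.
- exact: Odecomp_Gt.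
Qed.

Lemma Osub_Odecomp d x : (2 <= d)%N -> O d x -> Odecomp d x.
Proof.
move=> d2; apply: Span_min; first exact: Odecomp_subspace.
move=> _ [w [hw ->]]; apply: Odecomp_word => // g; exact: Odecomp_gen.
Qed.

End Relations.
End Filtration.

(* In a commutative algebra with G_{k+1} = ~G_{k+1} = 0 the relations reduce
   to W_{-k-1} = W_{k+1} and W_{k+2} = W_{-k}, whence the alternation. *)
Lemma Oq_rel_poly (F : fieldType) (q : F) :
  Oq_rel q (fun k => 'X ^+ (odd k).+1) (fun k => 'X ^+ (~~ odd k).+1)
           (fun _ => 0 : {poly F}) (fun _ => 0).
Proof.
have commr0 (x y : {poly F}) : commr x y = 0 by rewrite /commr mulrC subrr.
move=> k l; rewrite /qcommr !commr0 !mulr0 !mul0r !subrr !scaler0 !subrr !addr0 /= negbK !subrr.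
by do 15 split.
Qed.

Lemma Oq_free1 (F : fieldType) (q : F) (A : algType F) (Wm Wp G Gt : nat -> A) :
  is_Oq q Wm Wp G Gt -> forall a b c : F,
  a *: 1 + b *: Wm 0%N + c *: Wp 0%N = 0 -> [/\ a = 0, b = 0 & c = 0].
Proof.
case=> _ /(_ _ _ _ _ _ (Oq_rel_poly q)) [f [hf fgen _]] a b c habc.
have [flin f1 _] := hf; have [fWm0 [fWp0 _]] := fgen 0%N.
have := congr1 f habc; rewrite (lin_fun0 flin) !(lin_funD flin) !(lin_funZ flin).
rewrite f1 fWm0 fWp0 /= expr1 => h.
have := congr1 (fun p : {poly F} => p`_0) h; have := congr1 (fun p : {poly F} => p`_1) h.
have := congr1 (fun p : {poly F} => p`_2) h.
by rewrite /= !coefE /= !mulr0 !mulr1 !addr0 !add0r => -> -> ->.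
Qed.

Unset Implicit Arguments. Set Strict Implicit.

Theorem lemma7p4 (F : fieldType) (q : F)
  (hq0 : q != 0) (hq : forall n : nat, (0 < n)%N -> q ^+ n != 1)
  (A : algType F) (Wm Wp G Gt : nat -> A)
  (hA : is_Oq q Wm Wp G Gt) :
  (* (i) 1, W_0, W_1 is a basis of O_1 *)
  ((forall x : A, Osub Wm Wp G Gt 1 x <->
      exists a b c : F, x = a *: 1 + b *: Wm 0%N + c *: Wp 0%N) /\
   (forall a b c : F, a *: 1 + b *: Wm 0%N + c *: Wp 0%N = 0 ->
      [/\ a = 0, b = 0 & c = 0])) /\
  (* (ii) O_d = E_d + O_{d-1} + sum_{k=1}^{d-1} Span(O_k O_{d-k}) for d >= 2 *)
  (forall d : nat, (2 <= d)%N -> forall x : A,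
     Osub Wm Wp G Gt d x <->
     exists (e y : A) (z : nat -> A),
       [/\ (if odd d then e = 0 else exists a : F, e = a *: Gt (d./2).-1),
           Osub Wm Wp G Gt d.-1 y,
           (forall k, (1 <= k <= d.-1)%N ->
              Span (prodset (Osub Wm Wp G Gt k) (Osub Wm Wp G Gt (d - k))) (z k)) &
           x = e + y + \sum_(1 <= k < d) z k]).
Proof.
split; first split.
- exact: Osub1P.
- exact: Oq_free1 hA.
move=> d d2 x; split.
- exact: (Osub_Odecomp hA.1 hq0 (hq 4%N isT) d2).
- by apply: Odecomp_Osub; apply: leq_trans d2.
Qed.
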